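(* Let $\lambda>0$ and $K(\sigma,\tau)=\exp(-\lambda d(\sigma,\tau))$ (Mallows kernel) on $S_n$. Let $R_i,R_j\subseteq S_n$ be top-$k$ partial rankings and $N,M\ge1$. Let $(\sigma_n)_{n=1}^N$ be i.i.d. uniform on $R_i$ and $(\tau_m)_{m=1}^M$ i.i.d. uniform on $R_j$, independent of each other. Consider two cases: (antithetic) $\widetilde\sigma_n=A_{R_i}(\sigma_n)$ and $\widetilde\tau_m=A_{R_j}(\tau_m)$; (i.i.d.) $(\widetilde\sigma_n)_{n=1}^N$ i.i.d. uniform on $R_i$ and $(\widetilde\tau_m)_{m=1}^M$ i.i.d. uniform on $R_j$, all independent of each other and of the $\sigma_n,\tau_m$. Let $$\widehat K(R_i,R_j)=\frac1{4NM}\sum_{n=1}^N\sum_{m=1}^M\big(K(\sigma_n,\tau_m)+K(\widetilde\sigma_n,\tau_m)+K(\sigma_n,\widetilde\tau_m)+K(\widetilde\sigma_n,\widetilde\tau_m)\big),$$ and let $V_{\mathrm{anti}}(N,M)$ and $V_{\mathrm{iid}}(N,M)$ denote its variance in the two cases. Then the estimator has the same mean in both cases, and there is a constant $C$ independent of $N,M$ such that $V_{\mathrm{anti}}(N,M)\le V_{\mathrm{iid}}(N,M)+C/(NM)$ for all $N,M$; i.e. the leading-order (order $1/N$ and $1/M$) part of the variance is no larger in the antithetic case.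
   Context: $S_n$ is the symmetric group on $[n]$; $\sigma\in S_n$ is identified with the full ranking $\sigma(1)\succ\cdots\succ\sigma(n)$. For distinct items $x,y$, $\{x,y\}$ is discordant for $\sigma,\tau$ if $(\sigma^{-1}(x)-\sigma^{-1}(y))(\tau^{-1}(x)-\tau^{-1}(y))<0$. The Kendall distance $d(\sigma,\tau)$ is the number of unordered discordant pairs. For $0\le k\le n$ and distinct $a_1,\dots,a_k\in[n]$, the top-$k$ partial ranking is the set $R=\{\sigma\in S_n:\sigma(i)=a_i,\ i\le k\}$ (different $R$'s may have different $k$). The antithetic operator $A_R:R\to R$ is $A_R(\sigma)(i)=a_i$ for $i\le k$ and $A_R(\sigma)(k+j)=\sigma(n+1-j)$ for $j=1,\dots,n-k$. *)

From HB Require Import structures.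
From mathcomp Require Import all_boot all_order all_algebra all_fingroup.
From Stdlib Require Import Lia.
Set Implicit Arguments. Unset Strict Implicit. Unset Printing Implicit Defensive.
Import Order.TTheory GRing.Theory Num.Theory.

(* Items and positions are 0-indexed: [n] is 'I_n, and a permutation
   s : 'S_n is the ranking s 0 > s 1 > ... > s (n-1); s^-1 x is the position of x. *)

Definition kendall n (s t : 'S_n) : nat :=
  #|[set p : 'I_n * 'I_n | (p.1 < p.2)%N &&
      (((s^-1)%g p.1 < (s^-1)%g p.2)%N != (((t^-1)%g p.1 < (t^-1)%g p.2)%N))]|.

(* Mallows kernel exp(-lambda d) written as q ^ d with q = exp(-lambda) in (0,1). *)
Definition mallows (R : rcfType) (q : R) n (s t : 'S_n) : R := q ^+ kendall s t.

(* Top-k partial ranking determined by the distinct items a = [a_1;...;a_k]. *)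
Definition topk n (a : seq 'I_n) : {set 'S_n} :=
  [set s : 'S_n | [forall i : 'I_n, (i < size a)%N ==> (s i == nth i a i)]].

(* Position map of the antithetic operator (0-indexed):
   p < k -> p,  k <= p < n -> k + n - 1 - p (reversal of the tail). *)
Definition anti_idx (k n p : nat) : nat := if (p < k)%N then p else ((k + n).-1 - p)%N.

Lemma anti_idx_lt k n p : (p < n)%N -> (anti_idx k n p < n)%N.
Proof.
rewrite /anti_idx; case: ifP => // /negbT; rewrite -leqNgt => hkp hpn.
move/ssrnat.leP: hkp => hkp; move/ssrnat.leP: hpn => hpn; apply/ssrnat.leP.
rewrite -subn1 -!minusE -plusE; lia.
Qed.

Lemma anti_idx_invol k n p : (p < n)%N -> anti_idx k n (anti_idx k n p) = p.
Proof.
rewrite /anti_idx; case: (ltnP p k) => hpk hpn; first by rewrite hpk.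
have -> : ((k + n).-1 - p < k)%N = false.
  apply/negbTE; rewrite -leqNgt.
  move/ssrnat.leP: hpk => hpk; move/ssrnat.leP: hpn => hpn; apply/ssrnat.leP.
  rewrite -subn1 -!minusE -plusE; lia.
move/ssrnat.leP: hpk => hpk; move/ssrnat.leP: hpn => hpn.
rewrite -subn1 -!minusE -plusE; lia.
Qed.

Definition anti_fun k n (i : 'I_n) : 'I_n := Ordinal (anti_idx_lt k (ltn_ord i)).

Lemma anti_fun_inj k n : injective (@anti_fun k n).
Proof.
apply: (@can_inj _ _ _ (@anti_fun k n)) => i; apply: val_inj => /=.
exact: anti_idx_invol.
Qed.

Definition anti_perm k n : 'S_n := perm (@anti_fun_inj k n).

(* Antithetic operator A_R for R = topk a:  A(s)(p) = s (anti_idx k n p).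
   For s in R this is a_p for p < k and s(n-1+k-p) otherwise. *)
Definition antithetic n (a : seq 'I_n) (s : 'S_n) : 'S_n :=
  (anti_perm (size a) n * s)%g.

(* Samples: functions 'I_N -> 'S_n with all values in A (uniform i.i.d. = uniform on this set). *)
Definition samples n N (A : {set 'S_n}) : {set {ffun 'I_N -> 'S_n}} :=
  [set f : {ffun 'I_N -> 'S_n} | [forall i, f i \in A]].

Definition avg (R : rcfType) (T : finType) (A : {set T}) (X : T -> R) : R :=
  ((\sum_(w in A) X w) / #|A|%:R)%R.
Definition variance (R : rcfType) (T : finType) (A : {set T}) (X : T -> R) : R :=
  avg A (fun w => (X w - avg A X) ^+ 2)%R.

Definition estimator (R : rcfType) (q : R) n N M
    (s st : {ffun 'I_N -> 'S_n}) (t tt : {ffun 'I_M -> 'S_n}) : R :=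
  ((4 * N * M)%:R^-1 * \sum_(i < N) \sum_(j < M)
     (mallows q (s i) (t j) + mallows q (st i) (t j)
      + mallows q (s i) (tt j) + mallows q (st i) (tt j)))%R.

(* Antithetic case: sample space (sigma, tau); tilde variables are A(sigma_n), A(tau_m). *)
Definition Omega_anti n (a b : seq 'I_n) N M :=
  setX (samples N (topk a)) (samples M (topk b)).
Definition X_anti (R : rcfType) (q : R) n (a b : seq 'I_n) N M
    (w : {ffun 'I_N -> 'S_n} * {ffun 'I_M -> 'S_n}) : R :=
  estimator q w.1 [ffun i => antithetic a (w.1 i)] w.2 [ffun j => antithetic b (w.2 j)].

(* I.i.d. case: sample space ((sigma, sigma~), (tau, tau~)), all independent uniform. *)
Definition Omega_iid n (a b : seq 'I_n) N M :=
  setX (setX (samples N (topk a)) (samples N (topk a)))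
       (setX (samples M (topk b)) (samples M (topk b))).
Definition X_iid (R : rcfType) (q : R) n N M
    (w : ({ffun 'I_N -> 'S_n} * {ffun 'I_N -> 'S_n}) *
         ({ffun 'I_M -> 'S_n} * {ffun 'I_M -> 'S_n})) : R :=
  estimator q w.1.1 w.1.2 w.2.1 w.2.2.

Definition mean_anti (R : rcfType) (q : R) n (a b : seq 'I_n) N M : R :=
  avg (Omega_anti a b N M) (X_anti q a b (N:=N) (M:=M)).
Definition mean_iid (R : rcfType) (q : R) n (a b : seq 'I_n) N M : R :=
  avg (Omega_iid a b N M) (@X_iid R q n N M).
Definition V_anti (R : rcfType) (q : R) n (a b : seq 'I_n) N M : R :=
  variance (Omega_anti a b N M) (X_anti q a b (N:=N) (M:=M)).
Definition V_iid (R : rcfType) (q : R) n (a b : seq 'I_n) N M : R :=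
  variance (Omega_iid a b N M) (@X_iid R q n N M).

(* Write K_b(x) for the average of the Mallows kernel q^d(x,.) over the top-k ranking
   R_b.  For t in R_b, the discordant pairs of (x, t) that meet a fixed item of b depend on x
   alone (there are e_b(x) of them), while relabelling the free items shows that the
   q-weighted count of the remaining ones, summed over t in R_b, does not depend on x; hence
   K_b(x) = w q^(e_b(x)).  The antithetic operator of R_a keeps the order of every pair
   meeting a fixed item of a and reverses every other pair, so e_b(x) + e_b(A x) is constant
   on R_a: K_b and K_b o A are oppositely ordered and Chebyshev's sum inequality gives
   E[K_b(s) K_b(A s)] <= (E K_b)^2.
   Both estimators are two-sample V-statistics with the same kernel mean mu, and such a
   statistic has variance (k - r - l + mu^2)/(NM) + (r - mu^2)/N + (l - mu^2)/M, where k is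
   the second moment of the kernel and r, l those of its row and column means.  The
   covariance inequality gives r_anti <= r_iid and, the Mallows kernel being symmetric,
   l_anti <= l_iid; the remaining difference is a multiple of 1/(NM). *)

From mathcomp Require Import all_boot all_order all_algebra all_fingroup.
From mathcomp Require Import ring zify.
Import Order.TTheory GRing.Theory Num.Theory.
Set Implicit Arguments. Unset Strict Implicit. Unset Printing Implicit Defensive.

Section KendallDistance.
Variable n : nat.
Implicit Types (x y t : 'S_n) (u v w : 'I_n) (b : seq 'I_n) (G : {set 'I_n}).

Definition before x u v : bool := ((x^-1)%g u < (x^-1)%g v)%N.

Lemma beforexx x u : before x u u = false.
Proof. by rewrite /before ltnn. Qed.

Lemma beforeC x u v : u != v -> before x v u = ~~ before x u v.
Proof.
move=> uv; rewrite /before -leqNgt ltn_neqAle; case: eqP => //= /val_inj/perm_inj eq_uv.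
by rewrite eq_uv eqxx in uv.
Qed.

Lemma before_mulr x (p : 'S_n) u v : before (x * p)%g (p u) (p v) = before x u v.
Proof. by rewrite /before invMg !permM !permK. Qed.

Lemma kendallE x t : kendall x t = (\sum_u \sum_v (before x u v && before t v u))%N.
Proof.
rewrite /kendall -sum1_card big_mkcond /=; set S := [set p : 'I_n * 'I_n | _].
pose disc u v := before x u v && before t v u.
have pair_disc u v : (if (u, v) \in S then 1 else 0)%N = ((u < v) * (disc u v + disc v u))%N.
  rewrite inE /=; case: ltnP => uv //=.
  have neq_uv : u != v by apply: contraTneq uv => ->; rewrite ltnn.
  rewrite /disc !(beforeC _ neq_uv) -/(before x u v) -/(before t u v).
  by case: (before x u v); case: (before t u v).
transitivity (\sum_u \sum_v (if (u, v) \in S then 1 else 0))%N.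
  by rewrite pair_bigA; apply: eq_bigr => -[u v].
under eq_bigr do under eq_bigr do rewrite pair_disc mulnDr.
under eq_bigr do rewrite big_split /=.
rewrite big_split /= [X in (_ + X)%N]exchange_big -big_split /=.
apply: eq_bigr => u _; rewrite -big_split /=; apply: eq_bigr => v _.
have [->|neq_uv] := eqVneq u v; first by rewrite /disc beforexx !muln0.
rewrite -mulnDl; suff -> : ((u < v) + (v < u))%N = 1%N by rewrite mul1n.
by case: ltngtP => // eq_uv; move: neq_uv; rewrite (val_inj eq_uv) eqxx.
Qed.

Lemma kendallC x t : kendall x t = kendall t x.
Proof.
rewrite !kendallE exchange_big; apply: eq_bigr => u _; apply: eq_bigr => v _.
by rewrite andbC.
Qed.

Section FixedItems.
Variables (b : seq 'I_n) (b_le : (size b <= n)%N).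

Lemma topk_position t u : t \in topk b ->
  if u \in b then (t^-1)%g u = index u b :> nat else (size b <= (t^-1)%g u)%N.
Proof.
rewrite inE => /forallP t_b; case: ifP => u_b.
  have ub_n : (index u b < n)%N by apply: leq_trans b_le; rewrite index_mem.
  have /= := t_b (Ordinal ub_n); rewrite index_mem u_b nth_index // => /eqP t_u.
  by rewrite -{1}t_u permK.
rewrite leqNgt; apply: contraFN u_b => tu_b.
by have /= := t_b ((t^-1)%g u); rewrite tu_b permKV => /eqP ->; rewrite mem_nth.
Qed.

Lemma topk_before t u v : t \in topk b -> (u \in b) || (v \in b) ->
  before t v u = (index v b < index u b)%N.
Proof.
move=> t_b uv_b; rewrite /before.
move: (topk_position u t_b) (topk_position v t_b) uv_b.
case u_b: (u \in b); case v_b: (v \in b) => //= pu pv _.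
- by rewrite pu pv.
- rewrite pu (memNindex (negbT v_b)); have := index_mem u b; rewrite u_b => ub.
  by apply/idP/idP => [/(leq_ltn_trans pv)|/(ltn_trans ub)]; rewrite ?ltnn.
rewrite pv (memNindex (negbT u_b)); have := index_mem v b; rewrite v_b => vb.
by apply/idP/idP => // _; exact: leq_trans vb pu.
Qed.

Definition fixed_disc x : nat :=
  \sum_u \sum_v [&& (u \in b) || (v \in b), before x u v & (index v b < index u b)%N].

Definition free_disc x t : nat :=
  \sum_u \sum_v [&& u \notin b, v \notin b, before x u v & before t v u].

Lemma kendall_topk x t : t \in topk b -> kendall x t = (fixed_disc x + free_disc x t)%N.
Proof.
move=> t_b; rewrite kendallE -big_split /=; apply: eq_bigr => u _.
rewrite -big_split /=; apply: eq_bigr => v _.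
case u_b: (u \in b); case v_b: (v \in b) => /=; last by rewrite add0n.
all: by rewrite (topk_before t_b) ?u_b ?v_b // addn0.
Qed.

(* [(t * p)%g] is the ranking t with every item w renamed to [p w]. *)
Lemma free_disc_relabel x y (p : 'S_n) t :
  (forall w, (p w \in b) = (w \in b)) ->
  (forall u v, u \notin b -> v \notin b -> before y (p u) (p v) = before x u v) ->
  free_disc y (t * p)%g = free_disc x t.
Proof.
move=> pb p_order; rewrite /free_disc (reindex_inj (@perm_inj _ p)) /=.
apply: eq_bigr => u _; rewrite (reindex_inj (@perm_inj _ p)) /=; apply: eq_bigr => v _.
rewrite !pb before_mulr.
by case u_b: (u \in b); case v_b: (v \in b); rewrite //= p_order ?u_b ?v_b.
Qed.

End FixedItems.

Definition rank_in x G u : nat := #|[set w in G | before x w u]|.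

Lemma rank_in_lt x G u v : u \in G -> v \in G -> before x u v ->
  (rank_in x G u < rank_in x G v)%N.
Proof.
move=> uG vG uv; apply/proper_card/properP; split.
  by apply/subsetP => w; rewrite !inE => /andP[-> /ltn_trans]; apply.
by exists u; rewrite !inE ?uG ?uv ?beforexx.
Qed.

Lemma rank_in_bound x G u : u \in G -> (rank_in x G u < #|G|)%N.
Proof.
move=> uG; apply/proper_card/properP; split; last by exists u; rewrite ?inE ?uG ?beforexx.
by apply/subsetP => w; rewrite inE => /andP[].
Qed.

Lemma rank_in_ltE x G u v : u \in G -> v \in G ->
  before x u v = (rank_in x G u < rank_in x G v)%N.
Proof.
move=> uG vG; apply/idP/idP => [|lt_r]; first exact: rank_in_lt.
apply: contraTT lt_r => not_uv; rewrite -leqNgt.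
have [->//|neq_uv] := eqVneq u v.
by apply/ltnW/rank_in_lt; rewrite // beforeC.
Qed.

Lemma rank_in_inj x G : {in G &, injective (rank_in x G)}.
Proof.
move=> u v uG vG eq_uv; have [//|neq_uv] := eqVneq u v.
have := rank_in_ltE x uG vG; have := rank_in_ltE x vG uG.
by rewrite eq_uv ltnn (beforeC _ neq_uv) => /negbFE ->.
Qed.

Lemma rank_in_onto x G k : (k < #|G|)%N -> exists2 w, w \in G & rank_in x G w = k.
Proof.
move=> kG; pose s := [seq rank_in x G w | w <- enum G].
have s_uniq : uniq s.
  by rewrite map_inj_in_uniq ?enum_uniq // => u v; rewrite !mem_enum; apply: rank_in_inj.
have s_sub : {subset s <= iota 0 #|G|}.
  by move=> r /mapP[w wG ->]; rewrite mem_iota rank_in_bound // -mem_enum.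
have [|_ s_iota] := uniq_min_size s_uniq s_sub; first by rewrite size_iota size_map -cardE.
have /mapP[w] : k \in s by rewrite s_iota mem_iota.
by rewrite mem_enum => wG ->; exists w.
Qed.

(* [p] sends the free item of x-rank r among the free items to the one of y-rank r. *)
Lemma relabel_free b x y : exists p : 'S_n, [/\ forall w, w \in b -> p w = w,
  forall w, (p w \in b) = (w \in b) &
  forall u v, u \notin b -> v \notin b -> before y (p u) (p v) = before x u v].
Proof.
pose G := [set w | w \notin b].
pose f u := if u \in G then odflt u [pick w in G | rank_in y G w == rank_in x G u] else u.
have fG u : u \in G -> f u \in G /\ rank_in y G (f u) = rank_in x G u.
  move=> uG; rewrite /f uG; case: pickP => [w /andP[wG /eqP]|none] //=.
  have [w wG rw] := rank_in_onto y (rank_in_bound x uG).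
  by have := none w; rewrite wG rw eqxx.
have f_inj : injective f.
  move=> u v; case uG: (u \in G); case vG: (v \in G); last by rewrite /f uG vG.
  - move=> e; apply: (rank_in_inj (x := x) uG vG).
    by rewrite -(fG _ uG).2 -(fG _ vG).2 e.
  - by have [fuG _] := fG _ uG; rewrite {2}/f vG => e; rewrite e vG in fuG.
  - by have [fvG _] := fG _ vG; rewrite {1}/f uG => e; rewrite -e uG in fvG.
exists (perm f_inj); split=> [w wb|w|u v ub vb]; rewrite ?permE.
- by rewrite /f inE wb.
- case wG: (w \in G); last by rewrite /f wG.
  by have [fwG _] := fG _ wG; move: fwG wG; rewrite !inE => /negbTE -> /negbTE ->.
have uG : u \in G by rewrite inE.
have vG : v \in G by rewrite inE.
have [fuG ru] := fG _ uG; have [fvG rv] := fG _ vG.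
by rewrite (rank_in_ltE y fuG fvG) ru rv -rank_in_ltE.
Qed.
End KendallDistance.

Section Antithetic.
Variable n : nat.
Implicit Types (s : 'S_n) (u v : 'I_n) (a b : seq 'I_n).

Lemma anti_permE k (i : 'I_n) : anti_perm k n i = anti_idx k n i :> nat.
Proof. by rewrite permE. Qed.

Lemma anti_permV k : (anti_perm k n)^-1%g = anti_perm k n.
Proof.
apply/permP => i; apply: (@perm_inj _ (anti_perm k n)); rewrite permKV.
by apply: val_inj; rewrite /= !anti_permE anti_idx_invol // -anti_permE.
Qed.

Lemma before_antithetic a s u v : before (antithetic a s) u v =
  (anti_idx (size a) n ((s^-1)%g u) < anti_idx (size a) n ((s^-1)%g v))%N.
Proof. by rewrite /before /antithetic invMg !permM anti_permV !anti_permE. Qed.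

Lemma topk_antithetic a s : (antithetic a s \in topk a) = (s \in topk a).
Proof.
rewrite !inE; apply: eq_forallb => i; rewrite /antithetic permM.
case ia: (i < size a)%N => //=; congr (s _ == _); apply: val_inj.
by rewrite /= anti_permE /anti_idx ia.
Qed.

Section FixedItems.
Variables (a : seq 'I_n) (a_le : (size a <= n)%N).

Lemma before_add_antithetic s u v : s \in topk a ->
  (before s u v + before (antithetic a s) u v)%N =
  if (u \in a) || (v \in a) then ((index u a < index v a) * 2)%N else (u != v : nat).
Proof.
move=> s_a; rewrite before_antithetic.
have pu := topk_position a_le u s_a; have pv := topk_position a_le v s_a.
have := ltn_ord ((s^-1)%g u); have := ltn_ord ((s^-1)%g v).
rewrite /before /anti_idx.
set P := nat_of_ord ((s^-1)%g u) in pu *; set Q := nat_of_ord ((s^-1)%g v) in pv *.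
move=> Qn Pn; case uv_a: ((u \in a) || (v \in a)).
  have <- : (P < Q)%N = (index u a < index v a)%N.
    by have := topk_before a_le (u := v) (v := u) s_a; rewrite orbC uv_a => /(_ isT).
  have PQ_a : (P < size a)%N || (Q < size a)%N.
    by case/orP: uv_a => ia; [move: pu|move: pv]; rewrite ia => ->; rewrite index_mem ia ?orbT.
  by case: (ltnP P (size a)) PQ_a => Pa; case: (ltnP Q (size a)) => Qa //= _;
    case: ltngtP; lia.
move/negbT: uv_a; rewrite negb_or => /andP[/negbTE ua /negbTE va].
move: pu pv; rewrite ua va => Pa Qa.
have <- : (P == Q) = (u == v).
  by apply/eqP/eqP => [/val_inj/perm_inj|uv]; last rewrite /P /Q uv.
rewrite !ltnNge Pa Qa /=; case: ltngtP; lia.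
Qed.

Lemma fixed_disc_antithetic b s s' : s \in topk a -> s' \in topk a ->
  (fixed_disc b s + fixed_disc b (antithetic a s) =
   fixed_disc b s' + fixed_disc b (antithetic a s'))%N.
Proof.
have fixed_discE x : fixed_disc b x =
    (\sum_u \sum_v (((u \in b) || (v \in b)) && (index v b < index u b)) * before x u v)%N.
  apply: eq_bigr => u _; apply: eq_bigr => v _.
  by case: (_ || _); case: (before x u v); case: (_ < _)%N.
move=> s_a s'_a; rewrite !fixed_discE -!big_split /=; apply: eq_bigr => u _.
by rewrite -!big_split /=; apply: eq_bigr => v _; rewrite -!mulnDr !before_add_antithetic.
Qed.
End FixedItems.
End Antithetic.

Section TopkNonempty.
Variables (n : nat) (a : seq 'I_n) (a_uniq : uniq a).

Lemma size_uniq_ord_le : (size a <= n)%N.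
Proof.
by rewrite -[X in (_ <= X)%N](size_enum_ord n) uniq_leq_size // => i; rewrite mem_enum.
Qed.

Lemma topk_gt0 : (0 < #|topk a|)%N.
Proof.
pose s := a ++ [seq i <- enum 'I_n | i \notin a].
have s_uniq : uniq s.
  rewrite cat_uniq a_uniq filter_uniq ?enum_uniq // andbT.
  by apply/hasPn => i; rewrite mem_filter => /andP[].
have s_size : size s = n.
  rewrite -[RHS](size_enum_ord n); apply/perm_size/uniq_perm; rewrite ?enum_uniq //.
  by move=> i; rewrite mem_cat mem_filter mem_enum andbT orbN.
have s_inj : injective (fun i : 'I_n => nth i s i).
  move=> i j /eqP; rewrite (set_nth_default i j) ?s_size // nth_uniq ?s_size //.
  by move/eqP/val_inj.
apply/card_gt0P; exists (perm s_inj); rewrite inE; apply/forallP => i.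
by apply/implyP => ia; rewrite permE nth_cat ia.
Qed.
End TopkNonempty.

Local Open Scope ring_scope.

Section UniformAverage.
Variables (R : rcfType) (T : finType) (A : {set T}).
Implicit Types (X Y : T -> R) (c : R).

Lemma avgD X Y : avg A (fun w => X w + Y w) = avg A X + avg A Y.
Proof. by rewrite /avg big_split /= mulrDl. Qed.

Lemma avgZl c X : avg A (fun w => c * X w) = c * avg A X.
Proof. by rewrite /avg -mulr_sumr mulrA. Qed.

Lemma avgZr c X : avg A (fun w => X w * c) = avg A X * c.
Proof. by rewrite /avg -mulr_suml mulrAC. Qed.

Lemma avg_sum (I : Type) (r : seq I) (F : I -> T -> R) :
  avg A (fun w => \sum_(i <- r) F i w) = \sum_(i <- r) avg A (F i).
Proof. by rewrite /avg exchange_big /= mulr_suml. Qed.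

Lemma eq_avg X Y : {in A, X =1 Y} -> avg A X = avg A Y.
Proof. by move=> eXY; rewrite /avg (eq_bigr Y). Qed.

Lemma ler_avg X Y : {in A, forall w, X w <= Y w} -> avg A X <= avg A Y.
Proof. by move=> leXY; rewrite ler_wpM2r ?invr_ge0 ?ler0n // ler_sum. Qed.

Lemma avg_cst c : (0 < #|A|)%N -> avg A (fun=> c) = c.
Proof. by move=> A0; rewrite /avg sumr_const -[c *+ _]mulr_natr mulfK // pnatr_eq0 -lt0n. Qed.

Lemma eq_variance X Y : {in A, X =1 Y} -> variance A X = variance A Y.
Proof. by move=> eXY; rewrite /variance (eq_avg eXY); apply: eq_avg => w /eXY ->. Qed.

Lemma varianceE X : (0 < #|A|)%N ->
  variance A X = avg A (fun w => X w ^+ 2) - avg A X ^+ 2.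
Proof.
move=> A0; rewrite /variance (@eq_avg _
  (fun w => X w ^+ 2 + (- (2 * avg A X) * X w + avg A X ^+ 2))); last by move=> w _; ring.
by rewrite !avgD avgZl avg_cst //; ring.
Qed.

Lemma avgM_le_opposite (g1 g2 : T -> R) :
  {in A &, forall x y, (g1 x - g1 y) * (g2 x - g2 y) <= 0} ->
  avg A (fun x => g1 x * g2 x) <= avg A g1 * avg A g2.
Proof.
move=> opp; have [A0|A0] := posnP #|A|; first by rewrite /avg A0 invr0 !mulr0.
have expand : avg A (fun x => avg A (fun y => (g1 x - g1 y) * (g2 x - g2 y))) =
    2 * (avg A (fun x => g1 x * g2 x) - avg A g1 * avg A g2).
  rewrite (@eq_avg _ (fun x => g1 x * g2 x + (g1 x * - avg A g2 + g2 x * - avg A g1)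
                                + avg A (fun y => g1 y * g2 y))).
    by rewrite !avgD !avgZr avg_cst // -/(avg _ _); ring.
  move=> x _; rewrite (@eq_avg _ (fun y => g1 x * g2 x + (- g1 x * g2 y + - g2 x * g1 y)
                                        + g1 y * g2 y)); last by move=> y _; ring.
  by rewrite !avgD !avgZl avg_cst //; ring.
have : avg A (fun x => avg A (fun y => (g1 x - g1 y) * (g2 x - g2 y))) <= 0.
  rewrite -[0](@avg_cst 0) //; apply: ler_avg => x xA.
  by rewrite -[0](@avg_cst 0) //; apply: ler_avg => y yA; apply: opp.
by rewrite expand pmulr_rle0 // subr_le0.
Qed.

End UniformAverage.

Section ProductAverage.
Variables (R : rcfType) (T1 T2 : finType) (A : {set T1}) (B : {set T2}).

Lemma avg_setX (F : T1 * T2 -> R) :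
  avg (setX A B) F = avg A (fun x => avg B (fun y => F (x, y))).
Proof.
rewrite /avg -mulr_suml -mulrA -invfM cardsX mulnC natrM; congr (_ * _).
by rewrite pair_big /=; apply: eq_big => -[x y] //=; rewrite in_setX.
Qed.

Lemma avg_exchange (F : T1 -> T2 -> R) :
  avg A (fun x => avg B (F x)) = avg B (fun y => avg A (F^~ y)).
Proof.
by rewrite /avg -!mulr_suml -!mulrA -!invfM [(#|B|%:R * _)]mulrC exchange_big.
Qed.

Lemma avg_setX_fst (F : T1 -> R) : (0 < #|B|)%N -> avg (setX A B) (fun w => F w.1) = avg A F.
Proof. by move=> B0; rewrite avg_setX; apply: eq_avg => x _ /=; rewrite avg_cst. Qed.

Lemma avg_setX_snd (F : T2 -> R) : (0 < #|A|)%N -> avg (setX A B) (fun w => F w.2) = avg B F.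
Proof. by move=> A0; rewrite avg_setX /= avg_cst. Qed.

End ProductAverage.

Section Samples.
Variables (R : rcfType) (m N : nat) (A : {set 'S_m}).

Lemma sum_samples_prod (G : 'I_N -> 'S_m -> R) :
  \sum_(f in samples N A) \prod_i G i (f i) = \prod_i \sum_(x in A) G i x.
Proof.
under [RHS]eq_bigr do rewrite big_mkcond.
rewrite bigA_distr_bigA big_mkcond /=; apply: eq_bigr => f _; rewrite inE.
case: forallP => [fA | /forallP/forallPn [i /negbTE fiA]].
  by apply: eq_bigr => i _; rewrite fA.
by rewrite (bigD1 i) //= fiA mul0r.
Qed.

Lemma card_samples : #|samples N A|%:R = #|A|%:R ^+ N :> R.
Proof.
have := sum_samples_prod (fun _ _ => 1).
by rewrite !sumr_const !prodr_const card_ord expr1n.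
Qed.

Lemma avg_samples_prod (G : 'I_N -> 'S_m -> R) :
  avg (samples N A) (fun f => \prod_i G i (f i)) = \prod_i avg A (G i).
Proof.
by rewrite /avg sum_samples_prod card_samples prodf_div prodr_const card_ord.
Qed.

Lemma samples_gt0 : (0 < #|A|)%N -> (0 < #|samples N A|)%N.
Proof.
move=> A0; rewrite lt0n -(pnatr_eq0 R) card_samples expf_eq0 pnatr_eq0.
by rewrite negb_and -lt0n A0 orbT.
Qed.

Lemma avg_samples_mul2 (phi psi : 'S_m -> R) (i j : 'I_N) : (0 < #|A|)%N ->
  avg (samples N A) (fun f => phi (f i) * psi (f j)) =
  if i == j then avg A (fun x => phi x * psi x) else avg A phi * avg A psi.
Proof.
move=> A0; case: eqVneq => [<-|ij].
  pose G k x := if k == i then phi x * psi x else 1.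
  have prod1 (H : 'I_N -> R) : (forall k, k != i -> H k = 1) -> \prod_k H k = H i.
    by move=> H1; rewrite (bigD1 i) //= big1 ?mulr1.
  rewrite (eq_avg (Y := fun f : {ffun _} => \prod_k G k (f k))); last first.
    by move=> f _; rewrite prod1 /G ?eqxx // => k /negbTE ->.
  by rewrite avg_samples_prod prod1 /G ?eqxx // => k /negbTE ->; rewrite avg_cst.
pose G k x := if k == i then phi x else if k == j then psi x else 1.
have prod2 (H : 'I_N -> R) :
    (forall k, k != i -> k != j -> H k = 1) -> \prod_k H k = H i * H j.
  move=> H1; rewrite (bigD1 i) // (bigD1 j) /=; last by rewrite eq_sym.
  by rewrite big1 ?mulr1 ?mulrA // => k /andP[]; apply: H1.
have Gij : G i =1 phi /\ G j =1 psi by split=> x; rewrite /G eqxx // eq_sym (negbTE ij).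
rewrite (eq_avg (Y := fun f : {ffun _} => \prod_k G k (f k))); last first.
  by move=> f _; rewrite prod2 ?Gij.1 ?Gij.2 // => k /negbTE ki /negbTE kj; rewrite /G ki kj.
rewrite avg_samples_prod prod2 => [|k /negbTE ki /negbTE kj]; last by rewrite /G ki kj avg_cst.
by rewrite (eq_avg (in1W Gij.1)) (eq_avg (in1W Gij.2)).
Qed.

End Samples.

Section PairwiseIid.
Variable R : rcfType.

(* Only the first and second moments of an i.i.d. uniform family are recorded. *)
Definition pairwise_iid (T U : finType) N (S : {set T}) (u : 'I_N -> T -> U) (A : {set U}) :=
  [/\ (0 < #|S|)%N, (0 < #|A|)%N &
   forall (phi psi : U -> R) (i j : 'I_N),
     avg S (fun w => phi (u i w) * psi (u j w)) =
     if i == j then avg A (fun x => phi x * psi x) else avg A phi * avg A psi].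

Lemma pairwise_iid_avg (T U : finType) N (S : {set T}) (u : 'I_N -> T -> U) (A : {set U})
    (phi : U -> R) i :
  pairwise_iid S u A -> avg S (fun w => phi (u i w)) = avg A phi.
Proof.
case=> _ _ mom2; have := mom2 phi (fun=> 1) i i; rewrite eqxx.
by under eq_avg do rewrite mulr1; under [avg A _]eq_avg do rewrite mulr1.
Qed.

Lemma samples_pairwise_iid m N (A : {set 'S_m}) :
  (0 < #|A|)%N -> pairwise_iid (samples N A) (fun i f => f i) A.
Proof. by move=> A0; split=> [||phi psi i j]; rewrite ?samples_gt0 ?avg_samples_mul2. Qed.

Lemma pairwise_iid_setX (T1 T2 U1 U2 : finType) N (S1 : {set T1}) (S2 : {set T2})
    (u : 'I_N -> T1 -> U1) (v : 'I_N -> T2 -> U2) (A : {set U1}) (B : {set U2}) :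
  pairwise_iid S1 u A -> pairwise_iid S2 v B ->
  pairwise_iid (setX S1 S2) (fun i w => (u i w.1, v i w.2)) (setX A B).
Proof.
move=> iidu iidv; have [S10 A0 momu] := iidu; have [S20 B0 momv] := iidv.
split=> [||phi psi i j]; rewrite ?cardsX ?muln_gt0 ?S10 ?S20 ?A0 ?B0 // !avg_setX /=.
under eq_avg => x _ do rewrite (momv (fun y => phi (u i x, y)) (fun y => psi (u j x, y))).
case: eqVneq => [<-|ij]; first exact: pairwise_iid_avg iidu.
rewrite (momu (fun x => avg B (fun y => phi (x, y))) (fun x => avg B (fun y => psi (x, y)))).
by rewrite (negbTE ij).
Qed.

End PairwiseIid.

Lemma sum_if_diag (R : rcfType) N (al be : R) :
  \sum_(i < N) \sum_(j < N) (if i == j then al else be) =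
  N%:R * al + (N%:R * N%:R - N%:R) * be.
Proof.
have row i : \sum_(j < N) (if i == j then al else be) = al - be + N%:R * be.
  rewrite (eq_bigr (fun j => (if j == i then al - be else 0) + be)).
    by rewrite big_split /= -big_mkcond big_pred1_eq sumr_const card_ord mulr_natl.
  by move=> j _; rewrite eq_sym; case: ifP => _; ring.
by under eq_bigr do rewrite row; rewrite sumr_const card_ord -mulr_natl; ring.
Qed.

Section KernelMoments.
Variables (R : rcfType) (U1 U2 : finType) (A : {set U1}) (B : {set U2}) (h : U1 -> U2 -> R).

Definition kernel_mean := avg A (fun x => avg B (h x)).
Definition kernel_sq_mean := avg A (fun x => avg B (fun y => h x y ^+ 2)).
Definition row_sq_mean := avg A (fun x => avg B (h x) ^+ 2).
Definition col_sq_mean := avg B (fun y => avg A (h^~ y) ^+ 2).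

End KernelMoments.

Lemma col_sq_mean_transpose (R : rcfType) (U1 U2 : finType) (A : {set U1}) (B : {set U2})
    (h : U1 -> U2 -> R) (h' : U2 -> U1 -> R) :
  (forall x y, h' y x = h x y) -> col_sq_mean A B h = row_sq_mean B A h'.
Proof. by move=> hh'; apply: eq_avg => y _; congr (_ ^+ 2); apply: eq_avg => x _. Qed.

Definition vstat_variance (R : rcfType) (N M : nat) (c r l mu : R) : R :=
  (c - r - l + mu ^+ 2) / (N * M)%:R + (r - mu ^+ 2) / N%:R + (l - mu ^+ 2) / M%:R.

Lemma vstat_variance_le (R : rcfType) N M (c r l c' r' l' mu : R) : r <= r' -> l <= l' ->
  vstat_variance N M c r l mu <=
  vstat_variance N M c' r' l' mu + ((c - r - l) - (c' - r' - l')) / (N * M)%:R.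
Proof.
move=> le_r le_l; rewrite -subr_ge0 /vstat_variance.
have -> : (c' - r' - l' + mu ^+ 2) / (N * M)%:R + (r' - mu ^+ 2) / N%:R + (l' - mu ^+ 2) / M%:R
    + (c - r - l - (c' - r' - l')) / (N * M)%:R
    - ((c - r - l + mu ^+ 2) / (N * M)%:R + (r - mu ^+ 2) / N%:R + (l - mu ^+ 2) / M%:R)
    = (r' - r) / N%:R + (l' - l) / M%:R by ring.
by rewrite addr_ge0 // divr_ge0 // subr_ge0.
Qed.

Section TwoSampleVStatistic.
Variables (R : rcfType) (T1 T2 U1 U2 : finType) (N M : nat).
Variables (S1 : {set T1}) (S2 : {set T2}) (A : {set U1}) (B : {set U2}).
Variables (u : 'I_N -> T1 -> U1) (v : 'I_M -> T2 -> U2) (h : U1 -> U2 -> R).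
Hypotheses (iidu : pairwise_iid R S1 u A) (iidv : pairwise_iid R S2 v B).
Hypotheses (N_gt0 : (0 < N)%N) (M_gt0 : (0 < M)%N).

Definition vstat (w : T1 * T2) : R :=
  (N * M)%:R^-1 * \sum_(i < N) \sum_(j < M) h (u i w.1) (v j w.2).

Let mu := kernel_mean A B h.

Lemma avg_vstat_term (i : 'I_N) (j : 'I_M) :
  avg (setX S1 S2) (fun w => h (u i w.1) (v j w.2)) = mu.
Proof.
rewrite avg_setX /=; under eq_avg do rewrite (pairwise_iid_avg (h (u i _)) j iidv).
exact: pairwise_iid_avg iidu.
Qed.

Lemma avg_vstat_term_mul (i i' : 'I_N) (j j' : 'I_M) :
  avg (setX S1 S2) (fun w => h (u i w.1) (v j w.2) * h (u i' w.1) (v j' w.2)) =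
  if i == i' then (if j == j' then kernel_sq_mean A B h else row_sq_mean A B h)
  else (if j == j' then col_sq_mean A B h else mu ^+ 2).
Proof.
have [_ _ momu] := iidu; have [_ _ momv] := iidv.
rewrite avg_setX /=; under eq_avg => x _ do rewrite (momv (h (u i x)) (h (u i' x))).
case: (eqVneq j j') => _.
  rewrite avg_exchange; under eq_avg do rewrite (momu (h^~ _) (h^~ _)).
  case: eqP => _; last by apply: eq_avg => y _; rewrite expr2.
  by rewrite avg_exchange; apply: eq_avg => x _; apply: eq_avg => y _; rewrite expr2.
rewrite (momu (fun x => avg B (h x)) (fun x => avg B (h x))).
by case: eqP => _; rewrite ?expr2 //; apply: eq_avg => x _; rewrite expr2.
Qed.

Lemma avg_vstat : avg (setX S1 S2) vstat = mu.
Proof.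
rewrite /vstat avgZl avg_sum; under eq_bigr do rewrite avg_sum.
under eq_bigr do under eq_bigr do rewrite avg_vstat_term.
rewrite !sumr_const !card_ord -mulrnA [(M * N)%N]mulnC -[mu *+ _]mulr_natl mulKf //.
by rewrite pnatr_eq0 -lt0n muln_gt0 N_gt0 M_gt0.
Qed.

Lemma variance_vstat : variance (setX S1 S2) vstat =
  vstat_variance N M (kernel_sq_mean A B h) (row_sq_mean A B h) (col_sq_mean A B h) mu.
Proof.
have [S10 _ _] := iidu; have [S20 _ _] := iidv.
rewrite varianceE ?cardsX ?muln_gt0 ?S10 ?S20 // avg_vstat.
rewrite (eq_avg (Y := fun w => (N * M)%:R^-1 ^+ 2 * \sum_(i < N) \sum_(i' < N)
    \sum_(j < M) \sum_(j' < M) h (u i w.1) (v j w.2) * h (u i' w.1) (v j' w.2))); last first.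
  move=> w _; rewrite /vstat exprMn; congr (_ * _); rewrite expr2 big_distrlr /=.
  by apply: eq_bigr => i _; apply: eq_bigr => i' _; rewrite big_distrlr.
rewrite avgZl avg_sum; under eq_bigr do rewrite avg_sum.
under eq_bigr do under eq_bigr do rewrite avg_sum.
under eq_bigr do under eq_bigr do under eq_bigr do rewrite avg_sum.
under eq_bigr do under eq_bigr do under eq_bigr do under eq_bigr do rewrite avg_vstat_term_mul.
set c := kernel_sq_mean A B h; set r := row_sq_mean A B h; set l := col_sq_mean A B h.
have inner (i i' : 'I_N) : \sum_(j < M) \sum_(j' < M)
    (if i == i' then (if j == j' then c else r) else (if j == j' then l else mu ^+ 2)) =
    if i == i' then M%:R * c + (M%:R * M%:R - M%:R) * r
    else M%:R * l + (M%:R * M%:R - M%:R) * mu ^+ 2.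
  by case: (i == i'); apply: sum_if_diag.
under eq_bigr do under eq_bigr do rewrite inner.
rewrite sum_if_diag /vstat_variance natrM; field.
by rewrite !pnatr_eq0 -!lt0n N_gt0 M_gt0.
Qed.
End TwoSampleVStatistic.

Lemma mul_subr_expr_le0 (R : realDomainType) (q : R) (i j k l : nat) :
  0 <= q -> q <= 1 -> (i + k = j + l)%N ->
  (q ^+ i - q ^+ j) * (q ^+ k - q ^+ l) <= 0.
Proof.
move=> q_ge0 q_le1 ikjl; case: (leqP i j) => ij.
  have lk : (l <= k)%N by lia.
  by rewrite mulr_ge0_le0 // ?subr_ge0 ?subr_le0 ler_wiXn2l.
have kl : (k <= l)%N by lia.
by rewrite mulr_le0_ge0 // ?subr_ge0 ?subr_le0 ler_wiXn2l // ltnW.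
Qed.

Section MallowsTopk.
Variables (R : rcfType) (q : R) (n : nat).

Definition mallows_avg (b : seq 'I_n) (x : 'S_n) : R := avg (topk b) (mallows q x).

Definition free_weight (b : seq 'I_n) (x : 'S_n) : R :=
  \sum_(t in topk b) q ^+ free_disc b x t.

Lemma topk_mulr (b : seq 'I_n) (p t : 'S_n) : (forall w, w \in b -> p w = w) ->
  ((t * p)%g \in topk b) = (t \in topk b).
Proof.
move=> pb; rewrite !inE; apply: eq_forallb => i; rewrite permM.
case ib: (i < size b)%N => //=; have pbi : p (nth i b i) = nth i b i by rewrite pb ?mem_nth.
by rewrite -{1}pbi (inj_eq perm_inj).
Qed.

Lemma free_weight_const b x y : free_weight b x = free_weight b y.
Proof.
have [p [p_b pbE p_order]] := relabel_free b x y.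
rewrite /free_weight [RHS](reindex_inj (mulIg p)) /=.
by apply: eq_big => [t|t _]; rewrite ?topk_mulr // (free_disc_relabel _ pbE p_order).
Qed.

Lemma mallows_avgE b x : (size b <= n)%N ->
  mallows_avg b x = q ^+ fixed_disc b x * (free_weight b 1%g / #|topk b|%:R).
Proof.
move=> b_le; rewrite /mallows_avg /avg /mallows.
under eq_bigr => t t_b do rewrite (kendall_topk b_le x t_b) exprD.
by rewrite -mulr_sumr -(free_weight_const b x 1%g) mulrA.
Qed.

Lemma avg_antithetic a (phi : 'S_n -> R) :
  avg (topk a) (fun x => phi (antithetic a x)) = avg (topk a) phi.
Proof.
rewrite /avg; congr (_ / _); rewrite [RHS](reindex_inj (mulgI (anti_perm (size a) n))).
by apply: eq_bigl => x; rewrite /= -topk_antithetic.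
Qed.

Lemma mallows_avg_antithetic_le (a b : seq 'I_n) : 0 <= q -> q <= 1 ->
    (size a <= n)%N -> (size b <= n)%N ->
  avg (topk a) (fun x => mallows_avg b x * mallows_avg b (antithetic a x)) <=
  avg (topk a) (mallows_avg b) ^+ 2.
Proof.
move=> q_ge0 q_le1 a_le b_le; rewrite expr2 -{2}(avg_antithetic a (mallows_avg b)).
apply: avgM_le_opposite => x y x_a y_a; rewrite !mallows_avgE //.
set c := free_weight _ _ / _.
have c_ge0 : 0 <= c by rewrite divr_ge0 // sumr_ge0 // => t _; rewrite exprn_ge0.
rewrite -!mulrBl mulrACA mulr_le0_ge0 ?(mulr_ge0 c_ge0) //.
by apply: mul_subr_expr_le0 => //; apply: fixed_disc_antithetic.
Qed.
End MallowsTopk.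

Section AntitheticPairs.
Variables (R : rcfType) (T : finType) (A : {set T}) (F : T -> R) (ant : T -> T).
Hypotheses (A_gt0 : (0 < #|A|)%N).
Hypothesis avg_ant : forall phi : T -> R, avg A (phi \o ant) = avg A phi.

Lemma avg_half_antithetic : avg A (fun x => (F x + F (ant x)) / 2) = avg A F.
Proof. by rewrite avgZr avgD (avg_ant F); field. Qed.

Lemma avg_half_pair : avg (setX A A) (fun x => (F x.1 + F x.2) / 2) = avg A F.
Proof. by rewrite avgZr avgD avg_setX_fst // avg_setX_snd //; field. Qed.

Lemma avg_sq_half_antithetic_le :
  avg A (fun x => F x * F (ant x)) <= avg A F ^+ 2 ->
  avg A (fun x => ((F x + F (ant x)) / 2) ^+ 2) <=
  avg (setX A A) (fun x => ((F x.1 + F x.2) / 2) ^+ 2).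
Proof.
move=> cov_le; pose sq2 := avg A (fun x => F x ^+ 2).
have sq_half (y z : R) : ((y + z) / 2) ^+ 2 = (y ^+ 2 + z ^+ 2 + 2 * (y * z)) / 4.
  by field.
under eq_avg do rewrite sq_half; under [X in _ <= X]eq_avg do rewrite sq_half.
rewrite !avgZr !avgD avgZl (avg_ant (fun x => F x ^+ 2)) -/sq2.
rewrite (avg_setX_fst _ (fun x => F x ^+ 2)) // (avg_setX_snd _ (fun x => F x ^+ 2)) //.
have indep : avg (setX A A) (fun x => F x.1 * F x.2) = avg A F ^+ 2.
  by rewrite avg_setX /=; under eq_avg do rewrite avgZl; rewrite avgZr expr2.
rewrite avgZl indep -/sq2.
by rewrite ler_pM2r ?invr_gt0 ?ltr0n // lerD2l ler_pM2l ?ltr0n.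
Qed.
End AntitheticPairs.

Section Estimators.
Variables (R : rcfType) (q : R) (n : nat).
Implicit Types (a b : seq 'I_n).

Definition kernel_anti a b (x y : 'S_n) : R :=
  (mallows q x y + mallows q (antithetic a x) y + mallows q x (antithetic b y)
   + mallows q (antithetic a x) (antithetic b y)) / 4.

Definition kernel_iid (x y : 'S_n * 'S_n) : R :=
  (mallows q x.1 y.1 + mallows q x.2 y.1 + mallows q x.1 y.2 + mallows q x.2 y.2) / 4.

Lemma mallowsC (x y : 'S_n) : mallows q x y = mallows q y x.
Proof. by rewrite /mallows kendallC. Qed.

Lemma kernel_antiC a b x y : kernel_anti b a y x = kernel_anti a b x y.
Proof.
by rewrite /kernel_anti !(mallowsC y) !(mallowsC (antithetic b y)); congr (_ / _); ring.
Qed.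

Lemma kernel_iidC x y : kernel_iid y x = kernel_iid x y.
Proof. by rewrite /kernel_iid !(mallowsC y.1) !(mallowsC y.2); congr (_ / _); ring. Qed.

Lemma estimatorE N M (F : 'I_N -> 'I_M -> R) :
  (4 * N * M)%:R^-1 * \sum_i \sum_j F i j = (N * M)%:R^-1 * \sum_i \sum_j (F i j / 4).
Proof.
under [in RHS]eq_bigr do rewrite -mulr_suml.
by rewrite -mulr_suml -mulnA natrM invfM; ring.
Qed.

Lemma X_anti_vstat a b N M w : X_anti q a b (N := N) (M := M) w =
  vstat (fun i (f : {ffun 'I_N -> 'S_n}) => f i) (fun j (g : {ffun 'I_M -> 'S_n}) => g j)
        (kernel_anti a b) w.
Proof.
rewrite /X_anti /estimator estimatorE /vstat; congr (_ * _).
by apply: eq_bigr => i _; apply: eq_bigr => j _; rewrite !ffunE.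
Qed.

Lemma X_iid_vstat N M w : @X_iid R q n N M w =
  vstat (fun i (f : {ffun 'I_N -> 'S_n} * {ffun 'I_N -> 'S_n}) => (f.1 i, f.2 i))
        (fun j (g : {ffun 'I_M -> 'S_n} * {ffun 'I_M -> 'S_n}) => (g.1 j, g.2 j)) kernel_iid w.
Proof. by rewrite /X_iid /estimator estimatorE. Qed.

End Estimators.

Section KernelMomentsCompare.
Variables (R : rcfType) (q : R) (n : nat) (a b : seq 'I_n).

Lemma avg_kernel_anti x :
  avg (topk b) (kernel_anti q a b x) =
  (mallows_avg q b x + mallows_avg q b (antithetic a x)) / 2.
Proof.
rewrite /kernel_anti avgZr !avgD (avg_antithetic b (mallows q x)).
by rewrite (avg_antithetic b (mallows q (antithetic a x))) /mallows_avg; field.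
Qed.

Hypotheses (a_gt0 : (0 < #|topk a|)%N) (b_gt0 : (0 < #|topk b|)%N).

Lemma avg_kernel_iid x : avg (setX (topk b) (topk b)) (kernel_iid q x) =
  (mallows_avg q b x.1 + mallows_avg q b x.2) / 2.
Proof.
rewrite /kernel_iid avgZr !avgD !(avg_setX_fst _ (mallows q _)) //.
by rewrite !(avg_setX_snd _ (mallows q _)) // /mallows_avg; field.
Qed.

Lemma kernel_mean_anti_iid : kernel_mean (topk a) (topk b) (kernel_anti q a b) =
  kernel_mean (setX (topk a) (topk a)) (setX (topk b) (topk b)) (kernel_iid (n := n) q).
Proof.
rewrite /kernel_mean (eq_avg (in1W avg_kernel_anti)) (eq_avg (in1W avg_kernel_iid)).
by rewrite avg_half_antithetic ?avg_half_pair // => phi; apply: avg_antithetic.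
Qed.

Hypotheses (q_ge0 : 0 <= q) (q_le1 : q <= 1) (a_le : (size a <= n)%N) (b_le : (size b <= n)%N).

Lemma row_sq_mean_anti_le : row_sq_mean (topk a) (topk b) (kernel_anti q a b) <=
  row_sq_mean (setX (topk a) (topk a)) (setX (topk b) (topk b)) (kernel_iid (n := n) q).
Proof.
rewrite /row_sq_mean; under eq_avg do rewrite avg_kernel_anti.
under [X in _ <= X]eq_avg do rewrite avg_kernel_iid.
apply: avg_sq_half_antithetic_le => //; first by move=> phi; apply: avg_antithetic.
exact: mallows_avg_antithetic_le.
Qed.
End KernelMomentsCompare.

Lemma col_sq_mean_anti_le (R : rcfType) (q : R) n (a b : seq 'I_n) :
  0 <= q -> q <= 1 -> uniq a -> uniq b ->
  col_sq_mean (topk a) (topk b) (kernel_anti q a b) <=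
  col_sq_mean (setX (topk a) (topk a)) (setX (topk b) (topk b)) (kernel_iid (n := n) q).
Proof.
move=> q_ge0 q_le1 a_uniq b_uniq.
rewrite (col_sq_mean_transpose _ _ (kernel_antiC q a b)).
rewrite (col_sq_mean_transpose _ _ (@kernel_iidC _ q n)).
by apply: row_sq_mean_anti_le; rewrite ?topk_gt0 ?size_uniq_ord_le.
Qed.

Section EstimatorMoments.
Variables (R : rcfType) (q : R) (n : nat) (a b : seq 'I_n) (N M : nat).
Hypotheses (a_gt0 : (0 < #|topk a|)%N) (b_gt0 : (0 < #|topk b|)%N).
Hypotheses (N_gt0 : (0 < N)%N) (M_gt0 : (0 < M)%N).

Let A2 := setX (topk a) (topk a).
Let B2 := setX (topk b) (topk b).
Let hA := kernel_anti q a b.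
Let hI := kernel_iid (n := n) q.

Let iid_a := samples_pairwise_iid R N a_gt0.
Let iid_b := samples_pairwise_iid R M b_gt0.
Let iid2_a := pairwise_iid_setX iid_a iid_a.
Let iid2_b := pairwise_iid_setX iid_b iid_b.

Lemma mean_antiE : mean_anti q a b N M = kernel_mean (topk a) (topk b) hA.
Proof.
rewrite /mean_anti (eq_avg (in1W (@X_anti_vstat _ q _ a b N M))).
exact: avg_vstat iid_a iid_b N_gt0 M_gt0.
Qed.

Lemma mean_iidE : mean_iid q a b N M = kernel_mean A2 B2 hI.
Proof.
rewrite /mean_iid (eq_avg (in1W (@X_iid_vstat _ q n N M))).
exact: avg_vstat iid2_a iid2_b N_gt0 M_gt0.
Qed.

Lemma V_antiE : V_anti q a b N M = vstat_variance N M (kernel_sq_mean (topk a) (topk b) hA)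
  (row_sq_mean (topk a) (topk b) hA) (col_sq_mean (topk a) (topk b) hA)
  (kernel_mean (topk a) (topk b) hA).
Proof.
rewrite /V_anti (eq_variance (in1W (@X_anti_vstat _ q _ a b N M))).
exact: variance_vstat iid_a iid_b N_gt0 M_gt0.
Qed.

Lemma V_iidE : V_iid q a b N M = vstat_variance N M (kernel_sq_mean A2 B2 hI)
  (row_sq_mean A2 B2 hI) (col_sq_mean A2 B2 hI) (kernel_mean A2 B2 hI).
Proof.
rewrite /V_iid (eq_variance (in1W (@X_iid_vstat _ q n N M))).
exact: variance_vstat iid2_a iid2_b N_gt0 M_gt0.
Qed.
End EstimatorMoments.

Unset Implicit Arguments.

Theorem theorem5 (R : rcfType) (q : R) (hq0 : 0 < q) (hq1 : q < 1)
    (n : nat) (a b : seq 'I_n) (ha : uniq a) (hb : uniq b) :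
  (forall N M : nat, (0 < N)%N -> (0 < M)%N ->
     mean_anti q a b N M = mean_iid q a b N M) /\
  exists C : R, forall N M : nat, (0 < N)%N -> (0 < M)%N ->
     V_anti q a b N M <= V_iid q a b N M + C / (N * M)%:R.
Proof.
have [a_gt0 b_gt0] := (topk_gt0 ha, topk_gt0 hb).
have [a_le b_le] := (size_uniq_ord_le ha, size_uniq_ord_le hb).
split=> [N M N_gt0 M_gt0|].
  by rewrite mean_antiE // mean_iidE // kernel_mean_anti_iid.
set A2 := setX (topk a) (topk a); set B2 := setX (topk b) (topk b).
pose h := kernel_anti q a b; pose h' := kernel_iid (n := n) q.
exists ((kernel_sq_mean (topk a) (topk b) h - row_sq_mean (topk a) (topk b) h
         - col_sq_mean (topk a) (topk b) h)
      - (kernel_sq_mean A2 B2 h' - row_sq_mean A2 B2 h' - col_sq_mean A2 B2 h')).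
move=> N M N_gt0 M_gt0; rewrite V_antiE // V_iidE // kernel_mean_anti_iid //.
apply: vstat_variance_le; first exact: row_sq_mean_anti_le (ltW hq0) (ltW hq1) a_le b_le.
exact: col_sq_mean_anti_le (ltW hq0) (ltW hq1) ha hb.
Qed.
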